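(* Let $G_1$ and $G_2$ be topological groupoids with $G_1$ proper. Suppose that $f\colon G_1\to G_2$ is a surjective continuous groupoid morphism such that the induced map $f'\colon G_1^{(0)}\to G_2^{(0)}$ is proper. Then $G_2$ is proper.
   Context: A continuous map is proper if it is closed and has quasi-compact fibres (quasi-compact: every open cover has a finite subcover). A topological groupoid $G$ is proper if $(r,s)\colon G\to G^{(0)}\times G^{(0)}$ is proper. *)

From HB Require Import structures.
From mathcomp Require Import all_boot all_order.
From mathcomp Require Import all_classical topology.
Set Implicit Arguments. Unset Strict Implicit. Unset Printing Implicit Defensive.
Local Open Scope classical_set_scope.

(* A groupoid with unit space inside the arrow space G:
   composable pairs G^(2) = {(x,y) | s x = r y}, units G^(0) = range r. *)
Record groupoid (G : Type) := Groupoid {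
  gr : G -> G;
  gs : G -> G;
  gmul : G -> G -> G;
  ginv : G -> G;
  gr_r : forall x, gr (gr x) = gr x;
  gs_r : forall x, gs (gr x) = gr x;
  gr_s : forall x, gr (gs x) = gs x;
  gs_s : forall x, gs (gs x) = gs x;
  gr_mul : forall x y, gs x = gr y -> gr (gmul x y) = gr x;
  gs_mul : forall x y, gs x = gr y -> gs (gmul x y) = gs y;
  gmulA : forall x y z, gs x = gr y -> gs y = gr z ->
    gmul (gmul x y) z = gmul x (gmul y z);
  gmul_rl : forall x, gmul (gr x) x = x;
  gmul_sr : forall x, gmul x (gs x) = x;
  gr_inv : forall x, gr (ginv x) = gs x;
  gs_inv : forall x, gs (ginv x) = gr x;
  gmulV : forall x, gmul x (ginv x) = gr x;
  gmulVl : forall x, gmul (ginv x) x = gs x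
}.

Definition units (G : Type) (g : groupoid G) : set G := range (gr g).

Definition composable (G : Type) (g : groupoid G) : set (G * G) :=
  [set p | gs g p.1 = gr g p.2].

Definition topological_groupoid (G : topologicalType) (g : groupoid G) : Prop :=
  {within composable g, continuous (fun p : G * G => gmul g p.1 p.2)} /\
  continuous (ginv g).

Definition rel_closed (X : topologicalType) (A C : set X) : Prop :=
  exists D, closed D /\ C = A `&` D.

Definition proper_map (X Y : topologicalType) (A : set X) (B : set Y)
  (f : X -> Y) : Prop :=
  [/\ forall x, A x -> B (f x),
      (forall C, C `<=` A -> rel_closed A C -> rel_closed B (f @` C)) &
      (forall y, B y -> compact (A `&` f @^-1` [set y]))].

Definition proper_groupoid (G : topologicalType) (g : groupoid G) : Prop :=
  proper_map setT (units g `*` units g) (fun x => (gr g x, gs g x)).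

Definition groupoid_morphism (G1 G2 : Type) (g1 : groupoid G1)
  (g2 : groupoid G2) (f : G1 -> G2) : Prop :=
  forall x y, gs g1 x = gr g1 y ->
    gs g2 (f x) = gr g2 (f y) /\ f (gmul g1 x y) = gmul g2 (f x) (f y).

From mathcomp Require Import all_boot all_order.
From mathcomp Require Import all_classical topology.
Set Implicit Arguments. Unset Strict Implicit.
Local Open Scope classical_set_scope.

(* A map p : A -> B is proper iff every ultrafilter on A whose
   image converges to some y in B converges to a point of the fibre over y.
   This lifting property is stable under products and descends along a
   continuous surjection f : G1 -> G2: since (r, s) o f = (f x f) o (r, s),
   an ultrafilter on G2 lifts to one on G1, its limit for (r, s) lifts
   through f x f and then through the proper map (r, s) of G1, and f pushes
   the resulting limit back down.  A groupoid morphism commutes with r and s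
   because it maps units to idempotents, and idempotents are units. *)

Lemma fmap_ultra (T U : Type) (f : T -> U) (F : set_system T) :
  UltraFilter F -> UltraFilter (f @ F).
Proof.
move=> FU; split; first exact: fmap_proper_filter.
move=> G GF sfFG; rewrite predeqE => A; split; last exact: sfFG.
move=> GA; have [//|FnA] := in_ultra_setVsetC (f @^-1` A) FU.
have GnA : G (~` A) by apply: sfFG.
by have /filter_ex [? []] : G (A `&` ~` A) by exact: filterI.
Qed.

Lemma ultra_lift (T U : Type) (f : T -> U) (F : set_system U) :
  (forall y, exists x, f x = y) -> UltraFilter F ->
  exists2 W : set_system T, UltraFilter W & f @ W = F.
Proof.
move=> fsurj FU; pose W0 := filter_from F (preimage f).
have W0F : Filter W0.
  apply: filter_from_filter; first by exists setT; exact: filterT.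
  by move=> M N FM FN; exists (M `&` N); [exact: filterI|].
have W0P : ProperFilter W0.
  apply: filter_from_proper => M FM; have [y My] := filter_ex FM.
  by have [x fxy] := fsurj y; exists x; rewrite /= fxy.
have [W [WU sW0W]] := ultraFilterLemma W0P.
exists W => //; apply: (@max_filter _ F FU (f @ W)) => M FM.
by apply: sW0W; exists M.
Qed.

Definition lifts_ultralimits (X Y : topologicalType) (A : set X) (B : set Y)
    (p : X -> Y) :=
  forall F : set_system X, UltraFilter F -> F A -> forall y, B y ->
    p @ F --> y -> exists2 x, A x /\ p x = y & F --> x.

Section ProperMapFilters.
Variables (X Y : topologicalType) (A : set X) (B : set Y) (p : X -> Y).
Hypothesis pproper : proper_map A B p.

Lemma proper_map_fibre_closure (F : set_system X) (y : Y) :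
  ProperFilter F -> F A -> B y -> p @ F --> y ->
  forall M, F M -> (A `&` p @^-1` [set y]) `&` closure M !=set0.
Proof.
case: pproper => _ pclosed _ FF FA By pFy M FM.
apply: contrapT => /set0P/negP/negbNE/eqP fibre0.
have [D [cD pAM]] : rel_closed B (p @` (A `&` closure M)).
  apply: pclosed; first by move=> ? [].
  by exists (closure M); split => //; exact: closed_closure.
have nDy : ~ D y.
  move=> Dy; have : (B `&` D) y by [].
  rewrite -pAM => -[x [Ax Mx] pxy].
  by have : set0 x by rewrite -fibre0.
have FnD : F (p @^-1` ~` D).
  by apply: pFy; apply: open_nbhs_nbhs; split => //; rewrite openC.
have [x [[Ax Mx] nDx]] := filter_ex (filterI (filterI FA FM) FnD).
have : (B `&` D) (p x).
  by rewrite -pAM; exists x => //; split => //; exact: subset_closure.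
by case.
Qed.

Lemma proper_map_cluster (F : set_system X) (y : Y) :
  ProperFilter F -> F A -> B y -> p @ F --> y ->
  exists2 x, A x /\ p x = y & cluster F x.
Proof.
case: (pproper) => _ _ pcompact FF FA By pFy.
set K := A `&` p @^-1` [set y].
pose FK := filter_from F (fun M => K `&` closure M).
have FKF : Filter FK.
  apply: filter_from_filter; first by exists setT; exact: filterT.
  move=> M N FM FN; exists (M `&` N); first exact: filterI.
  by move=> z [Kz cz]; split; split => //; apply: closureS cz => ? [].
have FKP : ProperFilter FK.
  by apply: filter_from_proper; exact: proper_map_fibre_closure.
have [x [[Ax pxy] clx]] : K `&` cluster FK !=set0.
  by apply: pcompact => //; exists setT; [exact: filterT | move=> ? []].
exists x => //; rewrite clusterE => M FM.
have clKM : closure (K `&` closure M) x.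
  by move: clx; rewrite clusterE; apply; exists M.
rewrite (closure_id (closure M)).1; last exact: closed_closure.
by apply: closureS clKM => ? [].
Qed.

Lemma proper_map_lifts_ultralimits : lifts_ultralimits A B p.
Proof.
move=> F FU FA y By pFy.
have [x xy clx] := proper_map_cluster _ FA By pFy.
by exists x => //; move: clx; rewrite ultra_cvg_clusterE.
Qed.

End ProperMapFilters.

Section UltralimitLiftingMaps.
Variables (X Y : topologicalType) (A : set X) (B : set Y) (p : X -> Y).
Hypothesis plift : lifts_ultralimits A B p.

Lemma lifts_ultralimits_rel_closed (C : set X) :
  C `<=` A -> rel_closed A C -> B `&` closure (p @` C) `<=` p @` C.
Proof.
move=> CA [D [cD CAD]] y [By cly].
pose FC := filter_from (nbhs y) (fun N => C `&` p @^-1` N).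
have FCF : Filter FC.
  apply: filter_from_filter; first by exists setT; exact: filterT.
  move=> N1 N2 N1y N2y; exists (N1 `&` N2); first exact: filterI.
  by move=> z [Cz [? ?]]; split; split.
have FCP : ProperFilter FC.
  apply: filter_from_proper => N Ny.
  by have [_ [[c Cc <-] Npc]] := cly N Ny; exists c.
have [U [UU sFCU]] := ultraFilterLemma FCP.
have UC : U C by apply: sFCU; exists setT; [exact: filterT | move=> ? []].
have pUy : p @ U --> y by move=> N Ny; apply: sFCU; exists N => // ? [].
have [x [Ax pxy] Ux] := plift UU (filterS CA UC) By pUy.
have clCx : closure C x.
  by move=> N /Ux UN; apply: (@filter_ex _ U); exact: filterI.
have Dx : D x by apply: cD; apply: closureS clCx; rewrite CAD => ? [].
by exists x => //; rewrite CAD.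
Qed.

Lemma lifts_ultralimits_compact_fibre (y : Y) :
  B y -> compact (A `&` p @^-1` [set y]).
Proof.
move=> By; rewrite compact_ultra => F FU Fy.
have FA : F A by apply: filterS Fy => ? [].
have pFy : p @ F --> y.
  move=> N /nbhs_singleton Ny.
  by apply: (@filterS _ F _ (A `&` p @^-1` [set y])) => // z [_ /= ->].
have [x [Ax pxy] Fx] := plift FU FA By pFy.
by exists x; split => //; split.
Qed.

Lemma lifts_ultralimits_proper_map :
  (forall x, A x -> B (p x)) -> proper_map A B p.
Proof.
move=> pAB; split=> // [C CA Cclosed|]; last first.
  exact: lifts_ultralimits_compact_fibre.
exists (closure (p @` C)); split; first exact: closed_closure.
apply/seteqP; split; last exact: lifts_ultralimits_rel_closed.
move=> _ [c Cc <-]; split; first exact/pAB/CA.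
by apply: subset_closure; exists c.
Qed.

End UltralimitLiftingMaps.

Lemma lifts_ultralimits_prod (X1 Y1 X2 Y2 : topologicalType)
    (A1 : set X1) (B1 : set Y1) (A2 : set X2) (B2 : set Y2)
    (p1 : X1 -> Y1) (p2 : X2 -> Y2) :
  lifts_ultralimits A1 B1 p1 -> lifts_ultralimits A2 B2 p2 ->
  lifts_ultralimits (A1 `*` A2) (B1 `*` B2) (fun z => (p1 z.1, p2 z.2)).
Proof.
move=> lift1 lift2 F FU FA [y1 y2] [By1 By2] pFy.
have [x1 [Ax1 pxy1] Fx1] : exists2 x1, A1 x1 /\ p1 x1 = y1 & fst @ F --> x1.
  apply: lift1 (fmap_ultra _ FU) _ _ By1 _.
    by apply: (@filterS _ F _ (A1 `*` A2)) FA => ? [].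
  move=> N Ny1; apply: (@filterS _ F _ _ _ _ (pFy (N `*` setT) _)) => [? []//|].
  by exists (N, setT) => //=; split => //; exact: filterT.
have [x2 [Ax2 pxy2] Fx2] : exists2 x2, A2 x2 /\ p2 x2 = y2 & snd @ F --> x2.
  apply: lift2 (fmap_ultra _ FU) _ _ By2 _.
    by apply: (@filterS _ F _ (A1 `*` A2)) FA => ? [].
  move=> N Ny2; apply: (@filterS _ F _ _ _ _ (pFy (setT `*` N) _)) => [? []//|].
  by exists (setT, N) => //=; split => //; exact: filterT.
exists (x1, x2); first by rewrite /= pxy1 pxy2.
move=> S [[S1 S2] /= [S1x1 S2x2] sS].
apply: (@filterS _ F _ (fst @^-1` S1 `&` snd @^-1` S2)).
  by move=> -[? ?] [? ?]; apply: sS.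
by apply: filterI; [exact: Fx1 | exact: Fx2].
Qed.

Lemma lifts_ultralimits_descent (X X' Y Y' : topologicalType)
    (B : set Y) (B' : set Y') (f : X -> X') (p : X -> Y) (p' : X' -> Y')
    (h : Y -> Y') :
  continuous f -> (forall x', exists x, f x = x') ->
  (forall x, h (p x) = p' (f x)) -> (forall x, B (p x)) ->
  lifts_ultralimits setT B p -> lifts_ultralimits B B' h ->
  lifts_ultralimits setT B' p'.
Proof.
move=> fcont fsurj hpp' pB plift hlift F FU _ y' By' p'Fy'.
have [W WU fWF] := ultra_lift fsurj FU.
have hpWy' : h @ (p @ W) --> y'.
  by move=> N /p'Fy'; rewrite -fWF; apply: (@filterS _ W) => x /=; rewrite hpp'.
have [y [By hyy'] pWy] :=
  hlift _ (fmap_ultra _ WU) (filterE _ pB) _ By' hpWy'.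
have [x [_ pxy] Wx] := plift _ WU filterT _ By pWy.
exists (f x); first by rewrite -hpp' pxy.
by rewrite -fWF; apply: cvg_trans (fcont x); exact: cvg_app.
Qed.

Lemma units_gr (G : Type) (g : groupoid G) (x : G) : units g (gr g x).
Proof. by exists x. Qed.

Lemma units_gs (G : Type) (g : groupoid G) (x : G) : units g (gs g x).
Proof. by exists (gs g x) => //; rewrite gr_s. Qed.

Lemma idempotent_gs (G : Type) (g : groupoid G) (e : G) :
  gs g e = gr g e -> gmul g e e = e -> gs g e = e.
Proof.
move=> se_re ee_e; rewrite -(gmulVl g e) -{2}ee_e -gmulA ?gs_inv //.
by rewrite gmulVl se_re gmul_rl.
Qed.

Section GroupoidMorphisms.
Variables (G1 G2 : Type) (g1 : groupoid G1) (g2 : groupoid G2) (f : G1 -> G2).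
Hypothesis fmorph : groupoid_morphism g1 g2 f.

Lemma morph_gs_gr (x : G1) : gs g2 (f (gr g1 x)) = f (gr g1 x).
Proof.
have rr_comp : gs g1 (gr g1 x) = gr g1 (gr g1 x) by rewrite gs_r gr_r.
have [srr frr] := fmorph rr_comp.
apply: idempotent_gs => //; rewrite -frr.
by have := gmul_rl g1 (gr g1 x); rewrite gr_r => ->.
Qed.

Lemma morph_gr (x : G1) : f (gr g1 x) = gr g2 (f x).
Proof. by have [<- _] := fmorph (gs_r g1 x); rewrite morph_gs_gr. Qed.

Lemma morph_gs (x : G1) : f (gs g1 x) = gs g2 (f x).
Proof.
have [-> _] := fmorph (esym (gr_s g1 x)).
by rewrite -{1}(gr_s g1 x) morph_gr.
Qed.

End GroupoidMorphisms.

Unset Implicit Arguments. Set Strict Implicit.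

Theorem proposition2p19 (G1 G2 : topologicalType)
  (g1 : groupoid G1) (g2 : groupoid G2) (f : G1 -> G2) :
  topological_groupoid g1 -> topological_groupoid g2 ->
  proper_groupoid g1 ->
  groupoid_morphism g1 g2 f -> continuous f -> (forall y, exists x, f x = y) ->
  proper_map (units g1) (units g2) f ->
  proper_groupoid g2.
Proof.
move=> _ _ g1proper fmorph fcont fsurj fproper.
apply: lifts_ultralimits_proper_map => [|x _]; last first.
  by split; [exact: units_gr | exact: units_gs].
have flift := proper_map_lifts_ultralimits fproper.
apply: (lifts_ultralimits_descent (p := fun x => (gr g1 x, gs g1 x))
  (h := fun u => (f u.1, f u.2)) (B := units g1 `*` units g1) fcont fsurj).
- by move=> x; rewrite /= (morph_gr fmorph) (morph_gs fmorph).
- by move=> x; split; [exact: units_gr | exact: units_gs].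
- exact: proper_map_lifts_ultralimits g1proper.
- exact: (lifts_ultralimits_prod flift flift).
Qed.
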